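(* Let $L>0$, $h>0$ and let $\hat \varphi:\mathbb{R}\to\mathbb{R}$ be any function. Suppose real sequences $(v_{L,k})$, $(i_{L,k})$, $(v_{M,k})$, $(i_{M,k})$, $(q_{M,k})$, $k=0,1,2,\dots$, satisfy for all $k$: $$v_{L,k}=L\frac{i_{L,k+1}-i_{L,k}}{h},\quad v_{M,k}=\frac{\hat \varphi(q_{M,k+1})-\hat \varphi(q_{M,k})}{h},\quad q_{M,k+1}=q_{M,k}+hi_{M,k},$$ $$v_{L,k}+v_{M,k}=0,\qquad i_{L,k}=i_{M,k}.$$ Then: 1) $(i_{L,k},q_{M,k})$ is an orbit of the two-dimensional map $$i_{L,k+1}=i_{L,k}-\tfrac{1}{L}\big(\hat \varphi(q_{M,k}+hi_{L,k})-\hat \varphi(q_{M,k})\big),\qquad q_{M,k+1}=q_{M,k}+hi_{L,k}.$$ 2) For any step size $h>0$, the function $\Theta_{ML}(i_L,q_M)=Li_L+\hat\varphi(q_M)$ is a first integral of this map, i.e. $\Theta_{ML}(i_{L,k+1},q_{M,k+1})=\Theta_{ML}(i_{L,k},q_{M,k})$ for all $k\ge0$ along every orbit. 3) Consequently $\mathbb{R}^2$ is foliated into the invariant sets $\mathcal{M}_{ML}(\Phi_0)=\{(i_L,q_M)\in\mathbb{R}^2: Li_L+\hat\varphi(q_M)=\Phi_0\}$, $\Phi_0\in\mathbb{R}$, and along any orbit of the map lying in $\mathcal{M}_{ML}(\Phi_0)$ the variable $q_{M,k}$ obeys the one-dimensional map $$q_{M,k+1}=q_{M,k}-\frac{h}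{L}\hat\varphi(q_{M,k})+\frac{h}{L}\Phi_0.$$
   Context: These equations model a discrete-time circuit of a linear inductor (inductance $L$, voltage $v_L$, current $i_L$) connected to an ideal charge-controlled memristor with constitutive relation $\varphi_M=\hat\varphi(q_M)$ (voltage $v_M$, current $i_M$, charge $q_M$), discretized with step size $h$; the last two equations are Kirchhoff's voltage and current laws. *)

From Stdlib Require Import Reals.
Open Scope R_scope.

Definition ML_map (L h : R) (phi : R -> R) (p : R * R) : R * R :=
  let (iL, qM) := p in
  (iL - / L * (phi (qM + h * iL) - phi qM), qM + h * iL).

Definition Theta_ML (L : R) (phi : R -> R) (p : R * R) : R :=
  L * fst p + phi (snd p).

Definition M_ML (L : R) (phi : R -> R) (Phi0 : R) (p : R * R) : Prop :=
  Theta_ML L phi p = Phi0.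

Definition is_orbit (f : R * R -> R * R) (x : nat -> R * R) : Prop :=
  forall k : nat, x (S k) = f (x k).

From Stdlib Require Import Reals Lra.
Open Scope R_scope.

(* Eliminating the voltages from Kirchhoff's voltage law gives
   L (i_{k+1} - i_k) = -(phi(q_{k+1}) - phi(q_k)), which is the map ML_map and
   says that L i + phi(q) does not change from one step to the next. On a level
   set Theta_ML = Phi0 one can then substitute h i_L = (h / L) (Phi0 - phi(q_M))
   into the charge update q_M' = q_M + h i_L. *)

Lemma circuit_step_ML_map (L h : R) (phi : R -> R) (i i' q q' : R) :
  L <> 0 -> h <> 0 ->
  L * (i' - i) / h + (phi q' - phi q) / h = 0 ->
  q' = q + h * i ->
  (i', q') = ML_map L h phi (i, q).
Proof.
  intros HL Hh KVL Hq; unfold ML_map; rewrite <- Hq.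
  assert (Hi : L * (i' - i) = - (phi q' - phi q)).
  { apply (Rmult_eq_reg_r (/ h)); [| now apply Rinv_neq_0_compat].
    unfold Rdiv in KVL; lra. }
  f_equal.
  apply (Rmult_eq_reg_l L); [| exact HL].
  rewrite Rmult_minus_distr_l, <- Rmult_assoc, Rinv_r, Rmult_1_l; lra.
Qed.

Lemma Theta_ML_ML_map (L h : R) (phi : R -> R) (p : R * R) :
  L <> 0 -> Theta_ML L phi (ML_map L h phi p) = Theta_ML L phi p.
Proof.
  intros HL; destruct p as [i q]; unfold Theta_ML, ML_map; simpl.
  field; exact HL.
Qed.

Lemma Theta_ML_orbit_S (L h : R) (phi : R -> R) (x : nat -> R * R) (k : nat) :
  L <> 0 -> is_orbit (ML_map L h phi) x ->
  Theta_ML L phi (x (S k)) = Theta_ML L phi (x k).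
Proof. intros HL Hx; rewrite Hx; exact (Theta_ML_ML_map _ _ _ _ HL). Qed.

Lemma M_ML_unique_level (L : R) (phi : R -> R) (p : R * R) :
  exists! Phi0 : R, M_ML L phi Phi0 p.
Proof. exists (Theta_ML L phi p); split; [reflexivity | now intros Phi0 ->]. Qed.

Lemma M_ML_ML_map (L h : R) (phi : R -> R) (Phi0 : R) (p : R * R) :
  L <> 0 -> M_ML L phi Phi0 p -> M_ML L phi Phi0 (ML_map L h phi p).
Proof. unfold M_ML; intros HL Hp; now rewrite Theta_ML_ML_map. Qed.

Lemma ML_map_snd_on_level (L h : R) (phi : R -> R) (Phi0 : R) (p : R * R) :
  L <> 0 -> M_ML L phi Phi0 p ->
  snd (ML_map L h phi p) = snd p - h / L * phi (snd p) + h / L * Phi0.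
Proof.
  intros HL; destruct p as [i q]; unfold M_ML, Theta_ML, ML_map; simpl.
  intros <-; field; exact HL.
Qed.

Theorem proposition2 (L h : R) (phi : R -> R)
  (vL iL vM iM qM : nat -> R) :
  0 < L -> 0 < h ->
  (forall k : nat,
     vL k = L * (iL (S k) - iL k) / h /\
     vM k = (phi (qM (S k)) - phi (qM k)) / h /\
     qM (S k) = qM k + h * iM k /\
     vL k + vM k = 0 /\
     iL k = iM k) ->
  (* 1) (i_L,k, q_M,k) is an orbit of the map *)
  is_orbit (ML_map L h phi) (fun k => (iL k, qM k)) /\
  (* 2) Theta_ML is a first integral, for every step size h' > 0 *)
  (forall (h' : R) (x : nat -> R * R), 0 < h' ->
     is_orbit (ML_map L h' phi) x ->
     forall k : nat, Theta_ML L phi (x (S k)) = Theta_ML L phi (x k)) /\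
  (* 3) foliation of R^2 into invariant level sets M_ML(Phi0) ... *)
  (forall p : R * R, exists! Phi0 : R, M_ML L phi Phi0 p) /\
  (forall (h' Phi0 : R) (p : R * R), 0 < h' ->
     M_ML L phi Phi0 p -> M_ML L phi Phi0 (ML_map L h' phi p)) /\
  (* ... and on an orbit lying in M_ML(Phi0), q_M obeys the 1D map *)
  (forall (h' Phi0 : R) (x : nat -> R * R), 0 < h' ->
     is_orbit (ML_map L h' phi) x ->
     (forall k : nat, M_ML L phi Phi0 (x k)) ->
     forall k : nat,
       snd (x (S k)) = snd (x k) - h' / L * phi (snd (x k)) + h' / L * Phi0).
Proof.
  intros HLpos Hhpos Hcircuit.
  assert (HL : L <> 0) by lra.
  split; [| split; [| split; [| split]]].
  - intros k; destruct (Hcircuit k) as (HvL & HvM & Hq & KVL & KCL).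
    apply circuit_step_ML_map; [exact HL | lra | |].
    + now rewrite <- HvL, <- HvM.
    + now rewrite KCL.
  - intros h' x _ Hx k; exact (Theta_ML_orbit_S _ _ _ _ k HL Hx).
  - exact (M_ML_unique_level L phi).
  - intros h' Phi0 p _; exact (M_ML_ML_map _ _ _ _ _ HL).
  - intros h' Phi0 x _ Hx Hlevel k.
    rewrite Hx; exact (ML_map_snd_on_level _ _ _ _ _ HL (Hlevel k)).
Qed.
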